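(* Let $\mathcal{M}_i=(E_i,\rho_i)$, $i=1,2$, be $q$-matroids, let $\mathcal{F}_i$ and $\mathcal{Z}_i$ be the collections of flats and of cyclic flats of $\mathcal{M}_i$, and let $\rho$ be the rank function of $\mathcal{M}_1\oplus\mathcal{M}_2$ on $E=E_1\oplus E_2$. Then for all subspaces $V\le E$, \[ \rho(V)=\dim V+\min_{F_1\in\mathcal{F}_1,F_2\in\mathcal{F}_2}\big(\rho_1(F_1)+\rho_2(F_2)-\dim((F_1\oplus F_2)\cap V)\big) =\dim V+\min_{Z_1\in\mathcal{Z}_1,Z_2\in\mathcal{Z}_2}\big(\rho_1(Z_1)+\rho_2(Z_2)-\dim((Z_1\oplus Z_2)\cap V)\big). \]
   Context: Let $\mathbb{F}=\mathbb{F}_q$. A $q$-matroid is $\mathcal{M}=(E,\rho)$, $E$ a finite-dimensional $\mathbb{F}$-vector space, $\rho$ from subspaces to $\mathbb{Z}_{\ge0}$ with $0\le\rho(V)\le\dim V$, monotone and submodular. A flat is $F$ with $\rho(F+\langle x\rangle)>\rho(F)$ for all $x\notin F$. The cyclic core is $\mathrm{cyc}(V)=\{x\in V\mid\rho(W)=\rho(V)\text{ for all }W\le V\text{ with }W+\langle x\rangle=V\}$; $V$ is cyclic if $\mathrm{cyc}(V)=V$; a cyclic flat is a flat that is cyclic. Direct sum: for $E=E_1\oplus E_2$ (each $E_i$ identified with its image) with projections $\pi_i:E\to E_i$, $\mathcal{M}_1\oplus\mathcal{M}_2=(E,\rho)$ where $\rho(V)=\dim V+\min_{X\le V}(\rho_1(\pi_1(X))+\rho_2(\pi_2(X))-\dim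 X)$. *)

From HB Require Import structures.
From mathcomp Require Import all_boot all_order all_algebra all_field.
Set Implicit Arguments. Unset Strict Implicit. Unset Printing Implicit Defensive.
Import Order.TTheory GRing.Theory Num.Theory.
Local Open Scope ring_scope.

Section QMatroid.
Variable F : finFieldType.

(* The (finite) list of all subspaces of vT: every subspace is spanned by
   a (\dim vT)-tuple of vectors, and vT is finite since F is. *)
Definition all_subspaces (vT : vectType F) : seq {vspace vT} :=
  [seq (<<(tval s : seq vT)>>)%VS | s : (\dim {: vT}%VS).-tuple (finvect_type vT)].

Definition min_over (T : Type) (s : seq T) (f : T -> int) : int :=
  let vs := map f s in foldr Order.min (head 0 vs) vs.

Definition is_qmatroid (vT : vectType F) (rho : {vspace vT} -> nat) : Prop :=
  [/\ forall V, (rho V <= \dim V)%N,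
      forall V W, (V <= W)%VS -> (rho V <= rho W)%N
    & forall V W, (rho (V + W)%VS + rho (V :&: W)%VS <= rho V + rho W)%N].

(* Flats: rho(X + <x>) > rho(X) for every vector x outside X
   (vT is finite, so this quantifier is decidable). *)
Definition is_flat (vT : vectType F) (rho : {vspace vT} -> nat) (X : {vspace vT}) : bool :=
  [forall x : finvect_type vT, (x \notin X) ==> (rho X < rho (X + <[x : vT]>)%VS)%N].

Definition in_cyc (vT : vectType F) (rho : {vspace vT} -> nat) (V : {vspace vT}) (x : vT) : bool :=
  (x \in V) && all (fun W => ((W <= V)%VS && (W + <[x]> == V)%VS) ==> (rho W == rho V))
                    (all_subspaces vT).

Definition is_cyclic (vT : vectType F) (rho : {vspace vT} -> nat) (V : {vspace vT}) : bool :=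
  [forall x : finvect_type vT, (x \in V) == in_cyc rho V x].

Definition is_cyclic_flat (vT : vectType F) (rho : {vspace vT} -> nat) (X : {vspace vT}) : bool :=
  is_flat rho X && is_cyclic rho X.

(* Direct sum E = E1 (+) E2, realised as the product vector space. *)
Variables (E1 E2 : vectType F).
Definition pi1 : 'Hom((E1 * E2)%type, E1) := linfun (fun x : E1 * E2 => x.1).
Definition pi2 : 'Hom((E1 * E2)%type, E2) := linfun (fun x : E1 * E2 => x.2).
Definition inj1 : 'Hom(E1, (E1 * E2)%type) := linfun (fun x : E1 => (x, 0) : E1 * E2).
Definition inj2 : 'Hom(E2, (E1 * E2)%type) := linfun (fun y : E2 => (0, y) : E1 * E2).

Definition dsum_sub (X1 : {vspace E1}) (X2 : {vspace E2}) : {vspace (E1 * E2)%type} :=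
  (inj1 @: X1 + inj2 @: X2)%VS.

Definition dsum_rank (rho1 : {vspace E1} -> nat) (rho2 : {vspace E2} -> nat)
  (V : {vspace (E1 * E2)%type}) : int :=
  (\dim V)%:Z + min_over [seq X <- all_subspaces (E1 * E2)%type | (X <= V)%VS]
    (fun X => (rho1 (pi1 @: X)%VS)%:Z + (rho2 (pi2 @: X)%VS)%:Z - (\dim X)%:Z).

End QMatroid.

From HB Require Import structures.
From mathcomp Require Import all_boot all_order all_algebra all_field zify.
Import Order.TTheory GRing.Theory Num.Theory.
Local Open Scope ring_scope.
Set Implicit Arguments. Unset Strict Implicit. Unset Printing Implicit Defensive.

(** The substitutions X |-> (pi1 X, pi2 X) and (A1, A2) |-> (A1 (+) A2) :&: V
   show that the minimum defining the rank of the direct sum equals the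
   minimum, over all pairs of subspaces (A1, A2), of
   rho1 A1 + rho2 A2 - dim ((A1 (+) A2) :&: V).  This pair objective does not
   increase when a non-flat A_i is enlarged by a vector that leaves its rank
   unchanged, nor when a non-cyclic A_i is replaced by a hyperplane W with
   rho_i W < rho_i A_i: the rank drops by at least one while the dimension
   of the intersection drops by at most one.  Iterating reaches a pair of
   cyclic flats, so the minimum may be taken over cyclic flats, and a
   fortiori over flats. *)

Lemma mem_all_subspaces (F : finFieldType) (vT : vectType F) (U : {vspace vT}) :
  U \in all_subspaces vT.
Proof.
set n := \dim {:vT}.
pose s : seq (finvect_type vT) := (vbasis U : seq vT) ++ nseq (n - \dim U) 0.
have size_s : size s == n.
  by rewrite size_cat size_tuple size_nseq subnKC // dimvS // subvf.
apply/mapP; exists (Tuple size_s); first by rewrite mem_enum.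
have span_zeros : <<nseq (n - \dim U) (0%R : vT)>>%VS = 0%VS.
  by apply/eqP; rewrite -subv0; apply/span_subvP => x /nseqP [-> _]; apply: mem0v.
by rewrite /= span_cat (span_basis (vbasisP U)) span_zeros addv0.
Qed.

Section FoldrMin.
Variables (d : Order.disp_t) (R : orderType d).

Lemma foldr_min_le (a y : R) l : y \in l -> (foldr Order.min a l <= y)%O.
Proof.
elim: l => //= b l IHl; rewrite inE ge_min => /predU1P [->|/IHl->]; by rewrite ?lexx ?orbT.
Qed.

Lemma foldr_min_mem (a : R) l : foldr Order.min a l \in a :: l.
Proof.
elim: l => [|b l IHl] /=; first exact: mem_head.
rewrite minEle; case: ifP => _; first by rewrite !inE eqxx orbT.
by move: IHl; rewrite !inE => /orP [->|->]; rewrite ?orbT.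
Qed.

End FoldrMin.

Section MinOver.
Variables (T : eqType) (s : seq T) (f : T -> int).

Lemma min_over_le x : x \in s -> min_over s f <= f x.
Proof. by move=> x_s; apply/foldr_min_le/map_f. Qed.

Lemma min_over_mem : s != [::] -> exists2 x, x \in s & min_over s f = f x.
Proof.
rewrite /min_over; case: s => [//|a s'] _.
have := foldr_min_mem (f a) [seq f y | y <- a :: s'].
rewrite inE => /predU1P [-> | /mapP [x x_s ->]].
  by exists a; rewrite ?mem_head.
by exists x.
Qed.

End MinOver.

Lemma min_over_eq (T U : eqType) (s : seq T) (t : seq U) f g :
  (forall x, x \in s -> exists2 y, y \in t & g y <= f x) ->
  (forall y, y \in t -> exists2 x, x \in s & f x <= g y) ->
  min_over s f = min_over t g.
Proof.
move=> s_dom t_dom.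
have [s0 | s_ne] := eqVneq s [::].
  case: t {s_dom} t_dom => [|y t] t_dom; first by rewrite s0.
  by have [x] := t_dom y (mem_head _ _); rewrite s0.
have [x x_s min_s] := min_over_mem f s_ne.
have [y y_t gy_le] := s_dom x x_s.
have t_ne : t != [::] by apply: contraTneq y_t => ->.
have [y' y'_t min_t] := min_over_mem g t_ne.
have [x' x'_s fx'_le] := t_dom y' y'_t.
apply/le_anti/andP; split.
  by rewrite min_t (le_trans (min_over_le f x'_s)).
by rewrite min_s (le_trans (min_over_le g y_t)).
Qed.

Section DimensionBounds.
Variables (F : finFieldType) (vT : vectType F).
Implicit Types (U V W : {vspace vT}) (x : vT).

Lemma dim_addv_line U x : (\dim (U + <[x]>) <= \dim U + 1)%N.
Proof.
by have := (dimv_add_leqif U <[x]>).1; rewrite dim_vline; case: (x != 0) => /=; lia.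
Qed.

Lemma dim_addv_line_gt U x : x \notin U -> (\dim U < \dim (U + <[x]>))%N.
Proof.
move=> xNU; rewrite (ltn_leqif (dimv_leqif_sup (addvSl U <[x]>))).
by apply: contra xNU => AxA; rewrite memvE (subv_trans (addvSr U _) AxA).
Qed.

Lemma dim_capv_addv U W V :
  (\dim ((U + W) :&: V) <= \dim (U :&: V) + \dim W)%N.
Proof.
set T := ((U + W) :&: V)%VS.
have UT_UV : (U :&: T)%VS = (U :&: V)%VS.
  by rewrite /T capvA (capv_idPl (addvSl U W)).
have UT_sub : (U + T <= U + W)%VS by rewrite subv_add addvSl capvSl.
have := dimv_sum_cap U T; have := dimvS UT_sub.
have := (dimv_add_leqif U W).1; rewrite UT_UV; lia.
Qed.

End DimensionBounds.

Section FlatsAndCyclicSpaces.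
Variables (F : finFieldType) (vT : vectType F) (rho : {vspace vT} -> nat).

Lemma not_flatP A :
  ~~ is_flat rho A -> exists2 x : vT, x \notin A & (rho (A + <[x]>) <= rho A)%N.
Proof. by case/forallPn => x; rewrite negb_imply -leqNgt => /andP []; exists x. Qed.

Lemma not_cyclicP A :
  ~~ is_cyclic rho A ->
  exists x (W : {vspace vT}), [/\ (W <= A)%VS, (W + <[x]>)%VS = A & rho W != rho A].
Proof.
case/forallPn => x; rewrite /in_cyc; case: (x \in A) => //=.
case/allPn => W _; rewrite negb_imply => /andP [/andP [W_A /eqP W_x] rhoW].
by exists x, W.
Qed.

End FlatsAndCyclicSpaces.

Section CyclicFlatReduction.
Variables (F : finFieldType) (vT wT : vectType F) (rho : {vspace vT} -> nat).
Hypothesis rho_mono : forall U W, (U <= W)%VS -> (rho U <= rho W)%N.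
Variables (h : 'Hom(vT, wT)) (B V : {vspace wT}).

Let cost (A : {vspace vT}) : int :=
  (rho A)%:Z - (\dim ((h @: A + B) :&: V))%:Z.

(* Dropping to a hyperplane lowers rho by at least one and raises the
   codimension by at most one, hence the weight 2. *)
Let potential (A : {vspace vT}) : nat := (2 * rho A + (\dim {:vT} - \dim A))%N.

Lemma cost_addv_line A x :
  (rho (A + <[x]>) <= rho A)%N -> cost (A + <[x]>) <= cost A.
Proof.
move=> rho_le; have sub : (h @: A + B <= h @: (A + <[x]>) + B)%VS.
  by rewrite addvS // limgS // addvSl.
by have := dimvS (capvS sub (subvv V)); rewrite /cost; lia.
Qed.

Lemma cost_drop_line W x :
  (rho W < rho (W + <[x]>))%N -> cost W <= cost (W + <[x]>).
Proof.
move=> rho_lt; rewrite /cost.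
have -> : (h @: (W + <[x]>) + B = h @: W + B + <[h x]>)%VS.
  by rewrite limgD limg_line -addvA (addvC <[_]>%VS) addvA.
have := dim_capv_addv (h @: W + B) <[h x]> V.
by rewrite dim_vline; case: (h x != 0) => /=; lia.
Qed.

Lemma exists_cyclic_flat_cost_le A :
  exists2 Z, is_cyclic_flat rho Z & cost Z <= cost A.
Proof.
have [n] := ubnP (potential A); elim: n => // n IHn in A *; rewrite ltnS => pot_A.
have dimA := dimvS (subvf A).
have improve A' : (potential A' < potential A)%N -> cost A' <= cost A ->
    exists2 Z, is_cyclic_flat rho Z & cost Z <= cost A.
  move=> pot_lt cost_le; have [Z Z_cf] := IHn A' (leq_trans pot_lt pot_A).
  by move/le_trans/(_ cost_le); exists Z.
have [A_flat | /not_flatP [x xNA rho_le]] := boolP (is_flat rho A); last first.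
  apply: (improve _ _ (cost_addv_line rho_le)); rewrite /potential.
  by have := dim_addv_line_gt xNA; have := dimvS (subvf (A + <[x]>)); lia.
have [A_cyc | /not_cyclicP [x [W [W_A W_x rhoW]]]] := boolP (is_cyclic rho A).
  by exists A => //; apply/andP.
have rho_lt : (rho W < rho (W + <[x]>))%N by rewrite W_x ltn_neqAle rhoW rho_mono.
have := cost_drop_line rho_lt; rewrite W_x => cost_le; apply: (improve W _ cost_le).
by rewrite /potential; have := dim_addv_line W x; rewrite W_x in rho_lt *; lia.
Qed.

End CyclicFlatReduction.

Section DirectSum.
Variables (F : finFieldType) (E1 E2 : vectType F).
Implicit Types (z : (E1 * E2)%type) (X : {vspace (E1 * E2)%type}).

Definition in_fst (x : E1) : (E1 * E2)%type := (x, 0).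
Definition in_snd (y : E2) : (E1 * E2)%type := (0, y).

Fact in_fst_is_linear : linear in_fst.
Proof. by move=> a u v; apply/eqP; rewrite xpair_eqE /= scaler0 addr0 !eqxx. Qed.
Fact in_snd_is_linear : linear in_snd.
Proof. by move=> a u v; apply/eqP; rewrite xpair_eqE /= scaler0 addr0 !eqxx. Qed.

HB.instance Definition _ :=
  GRing.isLinear.Build F E1 (E1 * E2)%type _ in_fst in_fst_is_linear.
HB.instance Definition _ :=
  GRing.isLinear.Build F E2 (E1 * E2)%type _ in_snd in_snd_is_linear.

Lemma inj1E x : inj1 E1 E2 x = (x, 0). Proof. exact: (lfunE in_fst). Qed.
Lemma inj2E y : inj2 E1 E2 y = (0, y). Proof. exact: (lfunE in_snd). Qed.
Lemma pi1E z : pi1 E1 E2 z = z.1. Proof. exact: (lfunE (@fst E1 E2)). Qed.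
Lemma pi2E z : pi2 E1 E2 z = z.2. Proof. exact: (lfunE (@snd E1 E2)). Qed.

Lemma mem_dsum_sub (A1 : {vspace E1}) (A2 : {vspace E2}) z :
  (z \in dsum_sub A1 A2) = (z.1 \in A1) && (z.2 \in A2).
Proof.
apply/memv_addP/andP => [[_ /memv_imgP [a a_A1 ->] [_ /memv_imgP [b b_A2 ->] ->]]|].
  by rewrite inj1E inj2E /= addr0 add0r.
case: z => a b /= [a_A1 b_A2]; exists (inj1 E1 E2 a); first exact: memv_img.
exists (inj2 E1 E2 b); first exact: memv_img.
by rewrite inj1E inj2E; apply/eqP; rewrite xpair_eqE /= addr0 add0r !eqxx.
Qed.

Lemma limg_pi1_dsum_sub (A1 : {vspace E1}) (A2 : {vspace E2}) :
  (pi1 E1 E2 @: dsum_sub A1 A2 <= A1)%VS.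
Proof. by apply/subvP => _ /memv_imgP [z /[!mem_dsum_sub] /andP [z1_A1 _] ->]; rewrite pi1E. Qed.

Lemma limg_pi2_dsum_sub (A1 : {vspace E1}) (A2 : {vspace E2}) :
  (pi2 E1 E2 @: dsum_sub A1 A2 <= A2)%VS.
Proof. by apply/subvP => _ /memv_imgP [z /[!mem_dsum_sub] /andP [_ z2_A2] ->]; rewrite pi2E. Qed.

Lemma sub_dsum_sub_limg X : (X <= dsum_sub (pi1 E1 E2 @: X) (pi2 E1 E2 @: X))%VS.
Proof. by apply/subvP => z z_X; rewrite mem_dsum_sub -pi1E -pi2E !memv_img. Qed.

Variables (rho1 : {vspace E1} -> nat) (rho2 : {vspace E2} -> nat).
Hypothesis rho1_mono : forall U W, (U <= W)%VS -> (rho1 U <= rho1 W)%N.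
Hypothesis rho2_mono : forall U W, (U <= W)%VS -> (rho2 U <= rho2 W)%N.
Variable V : {vspace (E1 * E2)%type}.

Let pair_cost (A1 : {vspace E1}) (A2 : {vspace E2}) : int :=
  (rho1 A1)%:Z + (rho2 A2)%:Z - (\dim (dsum_sub A1 A2 :&: V))%:Z.

Let subspace_cost X : int :=
  (rho1 (pi1 E1 E2 @: X))%:Z + (rho2 (pi2 E1 E2 @: X))%:Z - (\dim X)%:Z.

Lemma exists_cyclic_flat_pair_cost_le (A1 : {vspace E1}) (A2 : {vspace E2}) :
  exists Z1, exists2 Z2, is_cyclic_flat rho1 Z1 /\ is_cyclic_flat rho2 Z2 &
    pair_cost Z1 Z2 <= pair_cost A1 A2.
Proof.
have [Z1 Z1_cf le1] :=
  exists_cyclic_flat_cost_le rho1_mono (inj1 E1 E2) (inj2 E1 E2 @: A2) V A1.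
have [Z2 Z2_cf le2] :=
  exists_cyclic_flat_cost_le rho2_mono (inj2 E1 E2) (inj1 E1 E2 @: Z1) V A2.
exists Z1, Z2 => //; move: le1 le2; rewrite /pair_cost /dsum_sub.
rewrite !(addvC (inj2 E1 E2 @: _)%VS).
(* [set] identifies the two elaborations of the product space occurring
   here, which [lia] would otherwise treat as distinct atoms. *)
set d_ZZ := \dim (_ :&: V); set d_ZA := \dim (_ :&: V); set d_AA := \dim (_ :&: V); lia.
Qed.

Lemma subspace_cost_le_pair_cost (A1 : {vspace E1}) (A2 : {vspace E2}) :
  subspace_cost (dsum_sub A1 A2 :&: V) <= pair_cost A1 A2.
Proof.
have sub1 := subv_trans (limgS (pi1 E1 E2) (capvSl _ V)) (limg_pi1_dsum_sub A1 A2).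
have sub2 := subv_trans (limgS (pi2 E1 E2) (capvSl _ V)) (limg_pi2_dsum_sub A1 A2).
by have := rho1_mono sub1; have := rho2_mono sub2; rewrite /subspace_cost /pair_cost; lia.
Qed.

Lemma pair_cost_le_subspace_cost X :
  (X <= V)%VS -> pair_cost (pi1 E1 E2 @: X) (pi2 E1 E2 @: X) <= subspace_cost X.
Proof.
move=> X_V; have : (\dim X <= \dim (dsum_sub (pi1 E1 E2 @: X) (pi2 E1 E2 @: X) :&: V))%N.
  by apply: dimvS; rewrite subv_cap sub_dsum_sub_limg X_V.
by rewrite /pair_cost /subspace_cost; lia.
Qed.

Lemma dsum_rank_min_pairs (L : seq ({vspace E1} * {vspace E2})) :
  (forall Z1 Z2, is_cyclic_flat rho1 Z1 -> is_cyclic_flat rho2 Z2 -> (Z1, Z2) \in L) ->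
  dsum_rank rho1 rho2 V =
    (\dim V)%:Z + min_over L
      (fun p => (rho1 p.1)%:Z + (rho2 p.2)%:Z - (\dim (dsum_sub p.1 p.2 :&: V))%:Z).
Proof.
move=> L_cf; congr (_ + _); apply: min_over_eq => [X | [A1 A2] _].
  rewrite mem_filter => /andP [X_V _].
  have [Z1 [Z2 [Z1_cf Z2_cf] le_Z]] :=
    exists_cyclic_flat_pair_cost_le (pi1 E1 E2 @: X) (pi2 E1 E2 @: X).
  exists (Z1, Z2); first exact: L_cf.
  exact: le_trans le_Z (pair_cost_le_subspace_cost X_V).
exists (dsum_sub A1 A2 :&: V)%VS; last exact: subspace_cost_le_pair_cost.
by rewrite mem_filter capvSr mem_all_subspaces.
Qed.

End DirectSum.

Theorem theorem5p8 (F : finFieldType) (E1 E2 : vectType F)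
  (rho1 : {vspace E1} -> nat) (rho2 : {vspace E2} -> nat) :
  is_qmatroid rho1 -> is_qmatroid rho2 ->
  forall V : {vspace (E1 * E2)%type},
    dsum_rank rho1 rho2 V =
      (\dim V)%:Z + min_over
        [seq (X1, X2) | X1 <- [seq X <- all_subspaces E1 | is_flat rho1 X],
                        X2 <- [seq X <- all_subspaces E2 | is_flat rho2 X]]
        (fun p => (rho1 p.1)%:Z + (rho2 p.2)%:Z - (\dim (dsum_sub p.1 p.2 :&: V))%:Z)
    /\
    dsum_rank rho1 rho2 V =
      (\dim V)%:Z + min_over
        [seq (Z1, Z2) | Z1 <- [seq X <- all_subspaces E1 | is_cyclic_flat rho1 X],
                        Z2 <- [seq X <- all_subspaces E2 | is_cyclic_flat rho2 X]]
        (fun p => (rho1 p.1)%:Z + (rho2 p.2)%:Z - (\dim (dsum_sub p.1 p.2 :&: V))%:Z).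
Proof.
move=> [_ rho1_mono _] [_ rho2_mono _] V.
have mem_pairs (P1 : pred {vspace E1}) (P2 : pred {vspace E2}) Z1 Z2 :
    P1 Z1 -> P2 Z2 ->
    (Z1, Z2) \in [seq (X1, X2) | X1 <- [seq X <- all_subspaces E1 | P1 X],
                                 X2 <- [seq X <- all_subspaces E2 | P2 X]].
  by move=> P1Z1 P2Z2; apply: allpairs_f; rewrite mem_filter mem_all_subspaces andbT.
split; apply: dsum_rank_min_pairs => // Z1 Z2 Z1_cf Z2_cf; apply: mem_pairs => //.
- by case/andP: Z1_cf.
- by case/andP: Z2_cf.
Qed.
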